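(* Let $n\ge1$, let $C=(c_{i,j})$ be an $n\times n$ Bott matrix over $\mathbb{Z}_2$, $Y_n=Y(C)$ the associated real Bott tower and $\alpha_{n+1},\dots,\alpha_{2n}\in\pi_1(Y_n)$ as defined below. Then the commutator subgroup $[\pi_1(Y_n),\pi_1(Y_n)]$ is a free abelian group with generators $\alpha_q^2$, where $n+1\le q\le 2n$ ranges over those indices for which there exists $p<q$ with $c_{p-n,q-n}=1$.
   Context: A Bott matrix is an $n\times n$ matrix $C=(c_{i,j})$ with entries in $\mathbb{Z}_2$ such that $c_{i,i}=1$ and $c_{i,j}=0$ for $i>j$. Label the facets of the $n$-cube $I^n$ as $F_1,\dots,F_{2n}$ with $F_j$, $F_{n+j}$ opposite. With $e_1,\dots,e_n$ the standard basis of $\mathbb{Z}_2^n$, set $\lambda(F_j)=e_j$, $\lambda(F_{n+j})=e_j+\sum_{k>j}c_{j,k}e_k$. The real Bott tower $Y(C)$ is the small cover $(\mathbb{Z}_2^n\times I^n)/\sim$, where $(t,p)\sim(t',p')$ iff $p=p'$ and $t-t'$ lies in the span of $\lambda(F)$ over facets $F\ni p$. Let $W$ be the right-angled Coxeter group with generators $s_1,\dots,s_{2n}$ and relations $s_j^2=1$ and $(s_is_j)^2=1$ for $1\le i<j\le 2n$, $j\ne i+n$; then $\pi_1(Y_n)$ is the kernel of the homomorphism $W\to\mathbb{Z}_2^n$, $s_i\mapsto\lambda(F_i)$. For $n+1\le j\le 2n$, $\alpha_j:=s_js_{j-n}s_{j-n+1}^{c_{j-n,j-n+1}}\cdots s_n^{c_{j-n,n}}$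 (so $\alpha_{2n}=s_{2n}s_n$); these lie in $\pi_1(Y_n)$. *)

From Stdlib Require Import Relation_Operators.
From mathcomp Require Import all_boot all_order all_algebra.
Set Implicit Arguments. Unset Strict Implicit. Unset Printing Implicit Defensive.
Import GRing.Theory.
Local Open Scope ring_scope.

(* Indices are 0-based: the paper's generator s_{i+1} (1 <= i+1 <= 2n) is the
   letter i : 'I_(n+n); the paper's facet F_{j+1} likewise. *)

Definition bott_matrix (n : nat) (C : 'M['F_2]_n) : Prop :=
  (forall i, C i i = 1) /\ (forall i j : 'I_n, (j < i)%N -> C i j = 0).

(* Elements of W are represented by words in the generators s_i (each s_i is an
   involution, so s_i^-1 = s_i and words need only positive letters);
   two words represent the same element iff they are related by the
   equivalence closure of inserting/deleting relators in context. *)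
Definition word (n : nat) := seq 'I_(n + n).

Definition relator (n : nat) (r : word n) : Prop :=
  (exists i, r = [:: i; i]) \/
  (exists i j : 'I_(n + n),
      (i < j)%N /\ (nat_of_ord j <> i + n)%N /\ r = [:: i; j; i; j]).

Inductive wstep (n : nat) : word n -> word n -> Prop :=
| wstep_rel (u v r : word n) : relator r -> wstep (u ++ r ++ v) (u ++ v).

Definition wequiv (n : nat) : word n -> word n -> Prop :=
  clos_refl_sym_trans (word n) (@wstep n).

(* group operations on words: product = concatenation, inverse = reversal *)
Definition winv (n : nat) (w : word n) : word n := rev w.

Definition wcomm (n : nat) (a b : word n) : word n :=
  winv a ++ winv b ++ a ++ b.

Definition wzpow (n : nat) (w : word n) (k : int) : word n :=
  match k with
  | Posz m => flatten (nseq m w)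
  | Negz m => flatten (nseq m.+1 (winv w))
  end.

Definition in_gen (n : nat) (S : word n -> Prop) (w : word n) : Prop :=
  exists l : seq (bool * word n),
    (forall x, x \in l -> S x.2) /\
    wequiv w (flatten [seq (if x.1 then winv x.2 else x.2) | x <- l]).

Definition unitv (n : nat) (j : 'I_n) : 'rV['F_2]_n := \row_k (if k == j then 1 else 0).

Definition lambda (n : nat) (C : 'M['F_2]_n) (i : 'I_(n + n)) : 'rV['F_2]_n :=
  match split i with
  | inl j => unitv j
  | inr j => unitv j + \sum_(k : 'I_n | (j < k)%N) C j k *: unitv k
  end.

Definition wmap (n : nat) (C : 'M['F_2]_n) (w : word n) : 'rV['F_2]_n :=
  \sum_(x <- w) lambda C x.

Definition in_pi1 (n : nat) (C : 'M['F_2]_n) (w : word n) : Prop := wmap C w = 0.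

Definition in_comm_pi1 (n : nat) (C : 'M['F_2]_n) : word n -> Prop :=
  in_gen (fun w => exists a b, in_pi1 C a /\ in_pi1 C b /\ w = wcomm a b).

(* alpha_{n+j} = s_{n+j} s_j s_{j+1}^{c_{j,j+1}} ... s_n^{c_{j,n}}  (0-based j) *)
Definition alpha (n : nat) (C : 'M['F_2]_n) (j : 'I_n) : word n :=
  [:: rshift n j; lshift n j] ++
  map (lshift n) (filter (fun k : 'I_n => (j < k)%N && (C j k == 1)) (enum 'I_n)).

Definition alpha2 (n : nat) (C : 'M['F_2]_n) (j : 'I_n) : word n :=
  alpha C j ++ alpha C j.

Definition Qset (n : nat) (C : 'M['F_2]_n) : {set 'I_n} :=
  [set j : 'I_n | [exists p : 'I_n, (p < j)%N && (C p j == 1)]].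

(* W is the direct product of n infinite dihedral groups, the j-th generated by s_j and
   s_{n+j}: every other pair of generators commutes.  Realising D_oo as the isometries
   m |-> t +- m of Z, the n projections W -> D_oo are jointly injective, because every word
   can be rewritten to the normal form (s_{n+j} s_j)^t s_j^b in each factor.
   For k outside Q only F_k and F_{n+k} have a nonzero e_k-component under lambda, so the
   k-th projection of a loop is a translation.  A commutator in D_oo is a translation by an
   even amount, and by 0 when neither entry is a reflection.  So [pi_1, pi_1] lies in the
   group of translations by 2Z in the factors q in Q (trivial elsewhere), which is free abelian
   on the images of the alpha_q^2; conversely alpha_q^2 = [alpha_p, alpha_q] whenever p < q
   and c_{p,q} = 1. *)

From Stdlib Require Import Relation_Operators Morphisms.
From mathcomp Require Import all_boot all_order all_algebra zify.
Set Implicit Arguments. Unset Strict Implicit. Unset Printing Implicit Defensive.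
Import GRing.Theory.
Local Open Scope ring_scope.

(** * The infinite dihedral group *)

(* [(b, t)] is the isometry [m |-> t + (-1)^b m] of Z and [dmul] is composition. *)
Definition dih := (bool * int)%type.

Definition did : dih := (false, 0).
Definition dmul (e f : dih) : dih := (e.1 (+) f.1, e.2 + (if e.1 then - f.2 else f.2)).
Definition dinv (e : dih) : dih := (e.1, if e.1 then e.2 else - e.2).
Definition dcomm (e f : dih) : dih := dmul (dinv e) (dmul (dinv f) (dmul e f)).

Lemma mul1d : left_id did dmul.
Proof. by case=> b t; rewrite /dmul /= add0r. Qed.

Lemma muld1 : right_id did dmul.
Proof. by case=> [[] t]; rewrite /dmul /= ?oppr0 addr0. Qed.

Lemma muldA : associative dmul.
Proof. by case=> [[] s] [[] t] [[] r]; rewrite /dmul /=; congr pair; lia. Qed.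

Lemma invdM e f : dinv (dmul e f) = dmul (dinv f) (dinv e).
Proof. by case: e f => [[] s] [[] t]; rewrite /dinv /dmul /=; congr pair; lia. Qed.

Lemma dcommE b1 t1 b2 t2 : dcomm (b1, t1) (b2, t2) =
  (false, if b1 then (if b2 then 2 * (t1 - t2) else 2 * t2)
          else (if b2 then - (2 * t1) else 0)).
Proof. by case: b1; case: b2; rewrite /dcomm /dmul /dinv /=; congr pair; lia. Qed.

(** * W as a product of infinite dihedral groups *)

Section Words.
Variable n : nat.
Implicit Types (u v w : word n) (x y : 'I_(n + n)).

Definition factor x : 'I_n := match split x with inl j | inr j => j end.
Definition opposite x : bool := if split x is inr _ then true else false.

Variant letter_spec : 'I_(n + n) -> 'I_n -> bool -> Type :=
  | LetterLo j : letter_spec (lshift n j) j false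
  | LetterHi j : letter_spec (rshift n j) j true.

Lemma letterP x : letter_spec x (factor x) (opposite x).
Proof. by rewrite /factor /opposite -{1}(splitK x); case: (split x) => j; constructor. Qed.

Lemma factor_lshift j : factor (lshift n j) = j.
Proof. by rewrite /factor (unsplitK (inl _ j)). Qed.

Lemma factor_rshift j : factor (rshift n j) = j.
Proof. by rewrite /factor (unsplitK (inr _ j)). Qed.

Lemma opposite_lshift j : opposite (lshift n j) = false.
Proof. by rewrite /opposite (unsplitK (inl _ j)). Qed.

Lemma opposite_rshift j : opposite (rshift n j) = true.
Proof. by rewrite /opposite (unsplitK (inr _ j)). Qed.

Lemma eq_factor x y : (x < y)%N -> (factor x == factor y) = (y == x + n :> nat)%N.
Proof.
case: letterP => j; case: letterP => k /=; rewrite -val_eqE /=;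
  have := ltn_ord j; have := ltn_ord k; lia.
Qed.

#[local] Instance wequiv_equiv : Equivalence (@wequiv n).
Proof. split; [exact: rst_refl | exact: rst_sym | exact: rst_trans]. Qed.

Lemma wequiv_ctx u1 u2 v v' : wequiv v v' -> wequiv (u1 ++ v ++ u2) (u1 ++ v' ++ u2).
Proof.
elim=> [_ _ [a b r Hr] | a | a b _ IH | a b c _ IH1 _ IH2].
- by apply: rst_step; have := wstep_rel (u1 ++ a) (b ++ u2) Hr; rewrite -!catA.
- by reflexivity.
- by symmetry.
- by transitivity (u1 ++ b ++ u2).
Qed.

#[local] Instance cat_wequiv : Proper (@wequiv n ==> @wequiv n ==> @wequiv n) cat.
Proof.
move=> u u' Hu v v' Hv; transitivity (u' ++ v).
  by have := wequiv_ctx [::] v Hu.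
by have := wequiv_ctx u' [::] Hv; rewrite !cats0.
Qed.

#[local] Instance cons_wequiv : Proper (eq ==> @wequiv n ==> @wequiv n) cons.
Proof. by move=> x _ <- u v Huv; exact: (cat_wequiv (reflexivity [:: x]) Huv). Qed.

Lemma wequiv_relator u1 u2 r : relator r -> wequiv (u1 ++ r ++ u2) (u1 ++ u2).
Proof. by move=> Hr; apply: rst_step; constructor. Qed.

Lemma wequiv_sqr u1 u2 x : wequiv (u1 ++ [:: x, x & u2]) (u1 ++ u2).
Proof. by apply: (@wequiv_relator u1 u2 [:: x; x]); left; exists x. Qed.

Lemma wequiv_swap x y : factor x != factor y -> wequiv [:: x; y] [:: y; x].
Proof.
wlog lt_xy : x y / (x < y)%N.
  move=> Hw; case: (ltngtP x y) => [/Hw//|/Hw Hyx Hf|/val_inj->]; last by rewrite eqxx.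
  by symmetry; apply: Hyx; rewrite eq_sym.
rewrite eq_factor // => /eqP Hf; symmetry.
transitivity ([:: y; x] ++ [:: x; y; x; y] ++ [::]).
  by symmetry; apply: (@wequiv_relator [:: y; x] [::]); right; exists x, y.
transitivity [:: y; y; x; y]; first exact: (@wequiv_sqr [:: y] [:: y; x; y] x).
exact: (@wequiv_sqr [::] [:: x; y] y).
Qed.

Lemma wequiv_commute x u : all (fun y => factor y != factor x) u ->
  wequiv (x :: u) (u ++ [:: x]).
Proof.
elim: u => [|y u IH] /=; first by reflexivity.
case/andP=> Hy /IH <-.
have Hxy : wequiv [:: x; y] [:: y; x] by apply: wequiv_swap; rewrite eq_sym.
by rewrite -[x :: y :: u]/([:: x; y] ++ u) Hxy; reflexivity.
Qed.

Lemma wequiv_winv_cancel u : wequiv (u ++ winv u) [::].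
Proof.
elim: u => [|x u IH] //=; first by reflexivity.
rewrite /winv in IH *; rewrite rev_cons -cats1 catA IH.
exact: (@wequiv_sqr [::] [::] x).
Qed.

Lemma wequiv_conj_rep x u v m : wequiv (x :: u) (v ++ [:: x]) ->
  wequiv (x :: flatten (nseq m u)) (flatten (nseq m v) ++ [:: x]).
Proof.
move=> Hxu; elim: m => [|m IH] /=; first by reflexivity.
by rewrite -cat_cons Hxu -catA /= IH catA; reflexivity.
Qed.

Lemma wequiv_conj_wzpow x u t :
    wequiv (x :: u) (winv u ++ [:: x]) -> wequiv (x :: winv u) (u ++ [:: x]) ->
  wequiv (x :: wzpow u t) (wzpow u (- t) ++ [:: x]).
Proof.
move=> Hu Hu'; case: t => [[|m]|m]; first by reflexivity.
- by rewrite -NegzE; apply: wequiv_conj_rep.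
- by rewrite NegzE opprK; apply: wequiv_conj_rep.
Qed.

Lemma wequiv_cat_wzpow u t : wequiv (u ++ wzpow u t) (wzpow u (1 + t)).
Proof.
case: t => [m|[|m]]; first by rewrite -PoszD; reflexivity.
- by rewrite /= cats0 wequiv_winv_cancel; reflexivity.
- have -> : 1 + Negz m.+1 = Negz m by rewrite !NegzE; lia.
  by rewrite [wzpow u (Negz m.+1)]/= catA wequiv_winv_cancel; reflexivity.
Qed.

(* [s_j] acts as [m |-> - m] and [s_{n+j}] as [m |-> 1 - m]. *)
Definition dgen x : dih := (true, Posz (opposite x)).

Fixpoint dproj j w : dih :=
  if w is x :: w' then
    if factor x == j then dmul (dgen x) (dproj j w') else dproj j w'
  else did.

Lemma dproj1 j x : dproj j [:: x] = if factor x == j then dgen x else did.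
Proof. by rewrite /=; case: ifP; rewrite ?muld1. Qed.

Lemma dproj_cat j u v : dproj j (u ++ v) = dmul (dproj j u) (dproj j v).
Proof. by elim: u => [|x u IH] /=; rewrite ?mul1d // IH; case: ifP; rewrite ?muldA. Qed.

Lemma dproj_winv j u : dproj j (winv u) = dinv (dproj j u).
Proof.
elim: u => [|x u IH] //=; rewrite /winv rev_cons -cats1 dproj_cat dproj1 IH.
by case: ifP; rewrite ?muld1 // invdM.
Qed.

Lemma dproj_wcomm j u v : dproj j (wcomm u v) = dcomm (dproj j u) (dproj j v).
Proof. by rewrite /wcomm !dproj_cat !dproj_winv. Qed.

Lemma dproj_wzpow j u t z : dproj j u = (false, t) -> dproj j (wzpow u z) = (false, z * t).
Proof.
have dproj_rep m v s :
    dproj j v = (false, s) -> dproj j (flatten (nseq m v)) = (false, m%:Z * s).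
  move=> Hv; elim: m => [|m IH] /=; first by rewrite mul0r.
  by rewrite dproj_cat IH Hv /dmul /= intS mulrDl mul1r.
move=> Hu; case: z => m; first exact: dproj_rep.
by rewrite (@dproj_rep _ _ (- t)) ?dproj_winv ?Hu // NegzE mulrN mulNr.
Qed.

Lemma dproj_relator j r : relator r -> dproj j r = did.
Proof.
have dgen_sqr x : dmul (dgen x) (dgen x) = did by rewrite /dmul /=; congr pair; lia.
case=> [[x ->]|[x [y [lt_xy [Hxy ->]]]]].
  by rewrite -[[:: x; x]]/([:: x] ++ [:: x]) dproj_cat dproj1; case: ifP; rewrite ?mul1d.
have Hf : factor x != factor y by rewrite eq_factor //; apply/eqP.
rewrite -[[:: x; y; x; y]]/([:: x] ++ [:: y] ++ [:: x] ++ [:: y]) !dproj_cat !dproj1.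
case: (eqVneq (factor x) j) => [Ex|_]; case: (eqVneq (factor y) j) => [Ey|_];
  rewrite ?mul1d ?muld1 //; first by rewrite Ex Ey eqxx in Hf.
Qed.

Lemma dproj_wequiv u v : wequiv u v -> forall j, dproj j u = dproj j v.
Proof.
elim=> [_ _ [a b r Hr]| a | a b _ IH | a b c _ IH1 _ IH2] j.
- by rewrite !dproj_cat (dproj_relator j Hr) mul1d.
- by [].
- by rewrite IH.
- by rewrite IH1 IH2.
Qed.

Definition dword j (e : dih) : word n :=
  wzpow [:: rshift n j; lshift n j] e.2 ++ nseq e.1 (lshift n j).

Definition normal_word (e : 'I_n -> dih) : word n :=
  flatten [seq dword j (e j) | j <- enum 'I_n].

Lemma all_wzpow (P : pred 'I_(n + n)) u t : all P u -> all P (wzpow u t).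
Proof.
have all_rep k v : all P v -> all P (flatten (nseq k v)).
  by move=> Pv; elim: k => //= k IH; rewrite all_cat Pv.
by move=> Pu; case: t => m; apply: all_rep; rewrite /winv ?all_rev.
Qed.

Lemma factor_dword j e : all (fun y => factor y == j) (dword j e).
Proof.
rewrite all_cat all_wzpow /= ?factor_lshift ?factor_rshift ?eqxx //.
by rewrite all_nseq factor_lshift eqxx orbT.
Qed.

Lemma wequiv_cons_dword x e :
  wequiv (x :: dword (factor x) e) (dword (factor x) (dmul (dgen x) e)).
Proof.
have flip (a : 'I_(n + n)) (c : bool) : wequiv ([:: a] ++ nseq c a) (nseq (~~ c) a).
  by case: c; [exact: (@wequiv_sqr [::] [::]) | reflexivity].
have conj (a b : 'I_(n + n)) t :
    wequiv (a :: wzpow [:: b; a] t) (wzpow [:: b; a] (- t) ++ [:: a]).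
  apply: wequiv_conj_wzpow; first by reflexivity.
  transitivity [:: b]; first exact: (@wequiv_sqr [::] [:: b] a).
  by symmetry; exact: (@wequiv_sqr [:: b] [::] a).
case: letterP => j; case: e => b0 t;
  rewrite /dword /dmul /dgen /= ?opposite_lshift ?opposite_rshift.
- by rewrite add0r -cat_cons conj -catA flip; reflexivity.
- transitivity ([:: rshift n j; lshift n j] ++
                 lshift n j :: wzpow [:: rshift n j; lshift n j] t ++ nseq b0 (lshift n j)).
    by symmetry; exact: (@wequiv_sqr [:: rshift n j]).
  by rewrite -cat_cons conj -catA flip catA wequiv_cat_wzpow; reflexivity.
Qed.

Lemma wequiv_cons_normal x e (s : seq 'I_n) : uniq s -> factor x \in s ->
  wequiv (x :: flatten [seq dword j (e j) | j <- s])
    (flatten [seq dword j (if factor x == j then dmul (dgen x) (e j) else e j) | j <- s]).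
Proof.
elim: s => [|j s IH] //= /andP [js Us]; rewrite inE.
case: (eqVneq (factor x) j) => [xj _|ne_xj /= xs]; first subst j.
  have -> : [seq dword k (if factor x == k then dmul (dgen x) (e k) else e k) | k <- s]
          = [seq dword k (e k) | k <- s].
    by apply/eq_in_map => k ks; case: eqP => // xk; rewrite xk ks in js.
  by rewrite -cat_cons wequiv_cons_dword; reflexivity.
rewrite -cat_cons wequiv_commute; last first.
  by apply: sub_all (factor_dword j (e j)) => y /eqP ->; rewrite eq_sym.
by rewrite -catA /= IH //; reflexivity.
Qed.

Lemma wequiv_normal_word w : wequiv w (normal_word (dproj^~ w)).
Proof.
elim: w => [|x w IH].
  have -> : normal_word (dproj^~ [::]) = [::].
    by rewrite /normal_word; elim: (enum 'I_n) => //= j s ->.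
  reflexivity.
transitivity (x :: normal_word (dproj^~ w)); first exact: cons_wequiv IH.
by rewrite /normal_word wequiv_cons_normal ?enum_uniq ?mem_enum //; reflexivity.
Qed.

Lemma wequivP u v : wequiv u v <-> forall j, dproj j u = dproj j v.
Proof.
split=> [|Huv]; first exact: dproj_wequiv.
rewrite (wequiv_normal_word u) (wequiv_normal_word v) /normal_word.
by under eq_map do rewrite Huv; reflexivity.
Qed.

Lemma wequiv_winv u v : wequiv u v -> wequiv (winv u) (winv v).
Proof. by move/wequivP=> Huv; apply/wequivP=> j; rewrite !dproj_winv Huv. Qed.

Section Generation.
Variable S : word n -> Prop.

Lemma in_gen_wequiv u v : wequiv u v -> in_gen S v -> in_gen S u.
Proof. by move=> Huv [l [Hl Hv]]; exists l; split=> //; rewrite Huv. Qed.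

Lemma in_gen_mem u : S u -> in_gen S u.
Proof.
by exists [:: (false, u)]; split=> [z /[!inE]/eqP-> //|]; rewrite /= cats0; reflexivity.
Qed.

Lemma in_gen_nil : in_gen S [::].
Proof. by exists [::]; split=> //; reflexivity. Qed.

Lemma in_gen_cat u v : in_gen S u -> in_gen S v -> in_gen S (u ++ v).
Proof.
move=> [l1 [Hl1 Hu]] [l2 [Hl2 Hv]]; exists (l1 ++ l2); split.
  by move=> z; rewrite mem_cat => /orP [/Hl1 | /Hl2].
by rewrite map_cat flatten_cat Hu Hv; reflexivity.
Qed.

Lemma in_gen_winv u : in_gen S u -> in_gen S (winv u).
Proof.
move=> [l [Hl Hu]]; exists [seq (~~ z.1, z.2) | z <- rev l]; split.
  by move=> z /mapP [y]; rewrite mem_rev => /Hl Sy ->.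
rewrite (wequiv_winv Hu) /winv rev_flatten -!map_rev -!map_comp.
have flip_rev : rev \o (fun z : bool * word n => if z.1 then rev z.2 else z.2) =1
    (fun z => if z.1 then rev z.2 else z.2) \o (fun z => (~~ z.1, z.2)).
  by case=> [[] s]; rewrite /= ?revK.
by rewrite (eq_map flip_rev); reflexivity.
Qed.

Lemma in_gen_wzpow u t : in_gen S u -> in_gen S (wzpow u t).
Proof.
have in_gen_rep m v : in_gen S v -> in_gen S (flatten (nseq m v)).
  by move=> Sv; elim: m => [|m IH]; [exact: in_gen_nil | exact: in_gen_cat].
by move=> Su; case: t => m; apply: in_gen_rep; last apply: in_gen_winv.
Qed.

Lemma dproj_in_gen (P : pred dih) j u :
    P did -> (forall e f, P e -> P f -> P (dmul e f)) -> (forall e, P e -> P (dinv e)) ->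
    (forall s, S s -> P (dproj j s)) ->
  in_gen S u -> P (dproj j u).
Proof.
move=> P1 PM PV PS [l [Hl /dproj_wequiv ->]].
elim: l Hl => [|[b s] l IH] Hl //=; rewrite dproj_cat.
apply: PM; last by apply: IH => z zl; apply: Hl; rewrite inE zl orbT.
by have := PS s (Hl _ (mem_head _ _)); case: b {Hl} => //; rewrite dproj_winv; apply: PV.
Qed.

End Generation.

Lemma in_gen_trans (S S' : word n -> Prop) u :
  (forall s, S s -> in_gen S' s) -> in_gen S u -> in_gen S' u.
Proof.
move=> HS [l [Hl Hu]]; apply: in_gen_wequiv Hu _.
elim: l Hl => [|[b s] l IH] Hl /=; first exact: in_gen_nil.
apply: in_gen_cat; last by apply: IH => z zl; apply: Hl; rewrite inE zl orbT.
by have := HS s (Hl _ (mem_head _ _)); case: b {Hl} => //; apply: in_gen_winv.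
Qed.

End Words.

(** * The commutator subgroup of pi_1 *)

Section BottTower.
Variables (n : nat) (C : 'M['F_2]_n).

Lemma addrr_F2 (z : 'F_2) : z + z = 0.
Proof. exact: addrr_pchar2 (pchar_Fp (isT : prime 2)) z. Qed.

Lemma F2_neq1 (z : 'F_2) : z != 1 -> z = 0.
Proof. by case: z => [[|[|m]] Hz] // _; apply: val_inj. Qed.

Lemma natr_negb (b : bool) : ((~~ b)%:R : 'F_2) = 1 + b%:R.
Proof. by case: b; rewrite ?addr0 ?addrr_F2. Qed.

Lemma notQ_entry (j k : 'I_n) : k \notin Qset C -> (j < k)%N -> C j k = 0.
Proof.
rewrite inE negb_exists => /forallP /(_ j) Hk jk.
by apply: F2_neq1; rewrite jk in Hk.
Qed.

Lemma lambda_notQ x k : k \notin Qset C -> lambda C x 0 k = (factor x == k)%:R.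
Proof.
move=> Hk; rewrite /lambda /factor.
have unitvE j : unitv j 0 k = (j == k)%:R by rewrite mxE eq_sym; case: eqP.
case: (split x) => j; first exact: unitvE.
rewrite mxE summxE big1 ?addr0 ?unitvE // => i ji.
rewrite !mxE; case: eqP => [ki|]; last by rewrite mulr0.
by subst i; rewrite notQ_entry ?mul0r.
Qed.

Lemma wmap_notQ w k : k \notin Qset C -> wmap C w 0 k = (dproj k w).1%:R.
Proof.
move=> Hk; elim: w => [|x w IH]; first by rewrite /wmap big_nil mxE.
rewrite /wmap big_cons mxE -/(wmap C w) IH lambda_notQ //=.
by case: eqP => _; rewrite ?add0r //= natr_negb.
Qed.

Lemma in_pi1_dproj_notQ a k : in_pi1 C a -> k \notin Qset C -> (dproj k a).1 = false.
Proof. by move=> Ha /(wmap_notQ a); rewrite Ha mxE; case: (dproj k a).1. Qed.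

Lemma dproj_map_lshift k (s : seq 'I_n) :
  dproj k (map (lshift n) s) = (odd (count_mem k s), 0).
Proof.
elim: s => [|j s IH] //=; rewrite factor_lshift IH /dgen opposite_lshift.
by case: eqP => _ //=; rewrite /dmul.
Qed.

Lemma dproj_alpha k q : dproj k (alpha C q) =
  if k == q then (false, 1) else ((q < k)%N && (C q k == 1), 0).
Proof.
rewrite /alpha dproj_cat dproj_map_lshift count_uniq_mem; last first.
  by rewrite filter_uniq // enum_uniq.
rewrite mem_filter mem_enum andbT /= factor_lshift factor_rshift /dgen.
rewrite opposite_lshift opposite_rshift (eq_sym q k).
by case: eqP => [->|_]; rewrite ?ltnn /= ?mul1d ?oddb // !muld1 /dmul /= oppr0 addr0.
Qed.

Lemma dproj_alpha2 k q : dproj k (alpha2 C q) = (false, if k == q then 2 else 0).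
Proof.
rewrite /alpha2 dproj_cat dproj_alpha.
by case: (k == q); rewrite /dmul /= ?addbb ?oppr0 ?if_same ?addr0.
Qed.

Lemma in_pi1_alpha q : in_pi1 C (alpha C q).
Proof.
rewrite /in_pi1 /wmap /alpha big_cat /= !big_cons big_nil addr0 big_map.
rewrite /lambda (unsplitK (inl _ q)) (unsplitK (inr _ q)) big_filter.
have -> : \sum_(k : 'I_n | (q < k)%N) C q k *: unitv k =
          \sum_(i <- enum 'I_n | (q < i)%N && (C q i == 1)) unitv i.
  rewrite big_enum_cond /= [LHS]big_mkcond [RHS]big_mkcond; apply: eq_bigr => i _.
  case: (q < i)%N; rewrite //=.
  by case: eqP => [->|/eqP/F2_neq1->]; rewrite ?scale0r ?scale1r.
under [X in _ + X]eq_bigr do rewrite (unsplitK (inl _ _)).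
have rowF2 (v : 'rV['F_2]_n) : v + v = 0 by apply/rowP => k; rewrite !mxE addrr_F2.
by rewrite (addrAC (unitv q)) rowF2 add0r rowF2.
Qed.

Definition in_comm_proj k (e : dih) : bool :=
  [&& ~~ e.1, (2 %| e.2)%Z & (k \in Qset C) || (e.2 == 0)].

Lemma dproj_in_comm_pi1 k w : in_comm_pi1 C w -> in_comm_proj k (dproj k w).
Proof.
apply: dproj_in_gen => [| [b1 t1] [b2 t2] | [b t] | _ [a [b [Ha [Hb ->]]]]].
- by rewrite /in_comm_proj /= orbT.
- rewrite /in_comm_proj /dmul /= => /and3P [/negbTE-> d1 z1] /and3P [/negbTE-> d2 z2] /=.
  by rewrite rpredD //; case: (k \in Qset C) z1 z2 => //= /eqP-> /eqP->.
- rewrite /in_comm_proj /dinv /= => /and3P [/negbTE-> d z] /=.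
  by rewrite rpredN d; case: (k \in Qset C) z => //= /eqP->.
rewrite dproj_wcomm /in_comm_proj; case: (boolP (k \in Qset C)) => kQ.
  case: (dproj k a) (dproj k b) => [b1 t1] [b2 t2]; rewrite dcommE /= andbT.
  by case: b1; case: b2; rewrite ?rpredN ?dvdz_mulr ?dvdzz ?dvdz0.
rewrite [dproj k a]surjective_pairing [dproj k b]surjective_pairing.
by rewrite !in_pi1_dproj_notQ // dcommE.
Qed.

Lemma dproj_alpha2_prod k (s : seq 'I_n) (m : 'I_n -> int) : uniq s ->
  dproj k (flatten [seq wzpow (alpha2 C q) (m q) | q <- s]) =
  (false, if k \in s then m k * 2 else 0).
Proof.
elim: s => [|q s IH] //= /andP [qs Us].
rewrite dproj_cat IH // (dproj_wzpow _ (dproj_alpha2 k q)) inE /dmul /=.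
by case: (eqVneq k q) => [->|_] /=; rewrite ?(negbTE qs) ?addr0 ?mulr0 ?add0r.
Qed.

Lemma wequiv_alpha2_prod w : (forall k, in_comm_proj k (dproj k w)) ->
  wequiv w (flatten [seq wzpow (alpha2 C q) ((dproj q w).2 %/ 2)%Z | q <- enum (Qset C)]).
Proof.
move=> Hw; apply/wequivP => k; rewrite dproj_alpha2_prod ?enum_uniq // mem_enum.
have := Hw k; case: (dproj k w) => b t; rewrite /in_comm_proj /= => /and3P [/negbTE-> d2].
by case: (k \in Qset C) => /= [_|/eqP->]; rewrite ?divzK.
Qed.

Lemma alpha2_wcomm (p q : 'I_n) : (p < q)%N -> C p q = 1 ->
  wequiv (alpha2 C q) (wcomm (alpha C p) (alpha C q)).
Proof.
move=> pq Cpq; apply/wequivP => k; rewrite dproj_wcomm dproj_alpha2 !dproj_alpha.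
have qp : (q == p) = false by rewrite -val_eqE /= gtn_eqF.
case: (eqVneq k q) => [->|_]; first by rewrite qp pq Cpq eqxx dcommE.
case: (eqVneq k p) => [->|_]; first by rewrite ltnNge ltnW // dcommE.
by rewrite dcommE; case: (_ && _); case: (_ && _).
Qed.

Lemma in_comm_pi1_alpha2 q : q \in Qset C -> in_comm_pi1 C (alpha2 C q).
Proof.
rewrite inE => /existsP [p /andP [pq /eqP Cpq]].
apply: in_gen_wequiv (alpha2_wcomm pq Cpq) (in_gen_mem _).
by exists (alpha C p), (alpha C q); do 2 (split; first exact: in_pi1_alpha).
Qed.

Lemma in_comm_pi1E w : in_comm_pi1 C w <->
  in_gen (fun x => exists2 q, q \in Qset C & x = alpha2 C q) w.
Proof.
split=> [Hw|]; last by apply: in_gen_trans => _ [q Qq ->]; apply: in_comm_pi1_alpha2.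
apply: in_gen_wequiv (wequiv_alpha2_prod (fun k => dproj_in_comm_pi1 k Hw)) _.
have : all (mem (Qset C)) (enum (Qset C)) by apply/allP => q; rewrite mem_enum.
elim: (enum _) => [_|q s IH /andP [Qq /IH Hs]] /=; first exact: in_gen_nil.
by apply: in_gen_cat Hs; apply/in_gen_wzpow/in_gen_mem; exists q.
Qed.

Lemma in_comm_pi1_commute x y : in_comm_pi1 C x -> in_comm_pi1 C y ->
  wequiv (x ++ y) (y ++ x).
Proof.
move=> /dproj_in_comm_pi1 Hx /dproj_in_comm_pi1 Hy; apply/wequivP => k.
move: (Hx k) (Hy k); rewrite !dproj_cat /in_comm_proj.
case: (dproj k x) (dproj k y) => [b1 t1] [b2 t2] /=.
by move=> /and3P [/negbTE-> _ _] /and3P [/negbTE-> _ _]; rewrite /dmul /= addrC.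
Qed.

Lemma alpha2_independent (m : 'I_n -> int) :
    wequiv (flatten [seq wzpow (alpha2 C q) (m q) | q <- enum (Qset C)]) [::] ->
  forall q, q \in Qset C -> m q = 0.
Proof.
move=> /wequivP Hm q Qq; have := Hm q.
by rewrite dproj_alpha2_prod ?enum_uniq // mem_enum Qq => -[]; lia.
Qed.

End BottTower.

Local Close Scope ring_scope.

Theorem corollary2p8 (n : nat) (C : 'M['F_2]_n) :
  (1 <= n)%N -> bott_matrix C ->
  (* [pi_1, pi_1] is the subgroup generated by the alpha_q^2, q in Q *)
  (forall w : word n,
     in_comm_pi1 C w <-> in_gen (fun x => exists2 q, q \in Qset C & x = alpha2 C q) w) /\
  (* it is abelian *)
  (forall x y : word n, in_comm_pi1 C x -> in_comm_pi1 C y -> wequiv (x ++ y) (y ++ x)) /\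
  (* and the alpha_q^2 are Z-linearly independent *)
  (forall k : 'I_n -> int,
     wequiv (flatten [seq wzpow (alpha2 C q) (k q) | q <- enum (Qset C)]) [::] ->
     forall q, q \in Qset C -> k q = 0).
Proof.
move=> _ _; split; first exact: in_comm_pi1E.
by split; [exact: in_comm_pi1_commute | exact: alpha2_independent].
Qed.
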